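(* Let $V$ be a unital JB-algebra, $a$ a projection in $V$ and $u$ a tripotent in $V_{1/2}(a)$. Then: (i) $p:=au^2$ is a projection satisfying $p\le a$, $u\in V_{1/2}(p)$ and $pu^2=p$; (ii) if $u\neq0$ then $p\neq0$; (iii) if $u$ and $v$ are orthogonal tripotents in $V_{1/2}(a)$, then $p:=au^2$ and $q:=av^2$ are orthogonal projections ($pq=0$) and $pv=uq=0$.
   Context: Products are the Jordan product of $V$, written by juxtaposition. The triple product is $\{xyz\}=(xy)z-(zx)y+(yz)x$. A projection is an idempotent $p=p^2$; $p\le a$ is the usual order of projections. A tripotent is $u$ with $\{uuu\}=u$. $V_{1/2}(a)=\{x: ax=\frac12x\}$. Tripotents $u,v$ are orthogonal if $\{uvv\}=0$ (equivalently $\{uuv\}=0$). *)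

From HB Require Import structures.
From mathcomp Require Import all_boot all_order all_algebra.
From mathcomp Require Import all_classical all_reals all_analysis.
Set Implicit Arguments. Unset Strict Implicit. Unset Printing Implicit Defensive.
Import Order.TTheory GRing.Theory Num.Theory.
Import numFieldNormedType.Exports.
Local Open Scope ring_scope.

Definition is_unital_JB_algebra (R : realType) (V : completeNormedModType R)
  (mul : V -> V -> V) (one : V) : Prop :=
  (forall x y z : V, mul (x + y) z = mul x z + mul y z) /\
      (forall (r : R) (x y : V), mul (r *: x) y = r *: mul x y) /\
      (forall x y : V, mul x y = mul y x) /\
      (forall x y : V, mul (mul x y) (mul x x) = mul x (mul y (mul x x))) /\
      (forall x : V, mul one x = x) /\
      (forall x y : V, `|mul x y| <= `|x| * `|y|) /\
      (forall x : V, `|mul x x| = `|x| ^+ 2) /\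
      (forall x y : V, `|mul x x| <= `|mul x x + mul y y|).

Section JBDefs.
Context (R : realType) (V : completeNormedModType R) (mul : V -> V -> V).

Definition triple (x y z : V) : V :=
  mul (mul x y) z - mul (mul z x) y + mul (mul y z) x.

Definition projection (p : V) : Prop := mul p p = p.

Definition tripotent (u : V) : Prop := triple u u u = u.

(* the usual order of a JB-algebra: y - x lies in the positive cone,
   i.e. is a square *)
Definition jle (x y : V) : Prop := exists z : V, y - x = mul z z.

Definition in_V12 (a x : V) : Prop := mul a x = (2%:R)^-1 *: x.

Definition orthogonal_trip (u v : V) : Prop := triple u v v = 0.
End JBDefs.

(* Only the algebraic axioms are used: bilinearity, commutativity and the
   Jordan identity (xy)x^2 = x(yx^2), over a field of characteristic 0.
   Polarizing the Jordan identity and keeping the part quadratic in u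
   expresses (u^2 y)x through products in which u occurs once per factor.
   Put c = 2a, so that c^2 = 2c and cu = u for u in V_1/2(a).  Taking
   (y, x) = (c, c), (c, u), (u^2, c), (c, u^2 c) and using u^3 = u shows that
   q = u^2 c satisfies qc = 2q, qu = u, qu^2 = q and q^2 = 2q; hence
   p = q/2 = au^2 is a projection with ap = p, pu = u/2 and pu^2 = p, and
   a - p is a projection, hence a square.  For orthogonal u, v we have
   v^2 u = 0; Peirce orthogonality of the projection v^2 (f^2 = f, fx = 0 and
   fy = y imply xy = 0) gives uv = 0 and u^2 v = 0, after which the same
   identity yields pv = 0, uq = 0 and pq = 0. *)

From HB Require Import structures.
From mathcomp Require Import all_boot all_order all_algebra.
From mathcomp Require Import all_classical all_reals all_analysis.
From mathcomp Require Import ring.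
Set Implicit Arguments. Unset Strict Implicit. Unset Printing Implicit Defensive.
Import Order.TTheory GRing.Theory Num.Theory.
Import numFieldNormedType.Exports.
Local Open Scope ring_scope.

(* The trivial extension of int by V: the ring int * V in which V is a
   square-zero ideal.  Identities in V that are Z-linear in their atoms are
   proved by [ring] after embedding V. *)
Section TrivialExtension.
Variable V : zmodType.

Definition trivext := (int * V)%type.
HB.instance Definition _ := GRing.Zmodule.on trivext.

Definition trivext_mul (x y : trivext) : trivext :=
  (x.1 * y.1, x.2 *~ y.1 + y.2 *~ x.1).

Lemma trivext_mulA : associative trivext_mul.
Proof.
move=> [m x] [n y] [k z]; congr pair; rewrite /= ?mulrA //.
by rewrite !mulrzDl -!mulrzA addrA [n * k]mulrC [k * m]mulrC [m * n]mulrC.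
Qed.

Lemma trivext_mulC : commutative trivext_mul.
Proof. by move=> [m x] [n y]; rewrite /trivext_mul /= mulrC addrC. Qed.

Lemma trivext_mul1 : left_id (1, 0) trivext_mul.
Proof. by move=> [m x]; rewrite /trivext_mul /= mul1r mul0rz add0r mulr1z. Qed.

Lemma trivext_mulDl : left_distributive trivext_mul +%R.
Proof.
move=> [m x] [n y] [k z]; congr pair; rewrite /= ?mulrDl //.
by rewrite mulrzDl mulrzDr addrACA.
Qed.

Lemma trivext1_neq0 : (1, 0) != 0 :> trivext.
Proof. by rewrite xpair_eqE oner_eq0. Qed.

HB.instance Definition _ := GRing.Zmodule_isComNzRing.Build trivext
  trivext_mulA trivext_mulC trivext_mul1 trivext_mulDl trivext1_neq0.

Definition trivext_in (x : V) : trivext := (0, x).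

Lemma trivext_in_inj : injective trivext_in.
Proof. by move=> x y []. Qed.

Lemma trivext_in_is_zmod_morphism : zmod_morphism trivext_in.
Proof. by move=> x y; rewrite /trivext_in; congr pair; rewrite subr0. Qed.

HB.instance Definition _ := GRing.isZmodMorphism.Build V trivext trivext_in
  trivext_in_is_zmod_morphism.

End TrivialExtension.

Ltac zmod_lin := apply: trivext_in_inj; ring.

Lemma eq_subr_transfer (U : zmodType) (x y x' y' : U) :
  x = y -> x' - y' = x - y -> x' = y'.
Proof. by move=> -> /eqP; rewrite subrr subr_eq0 => /eqP. Qed.

Lemma polarization3 (U : nmodType) (W : zmodType) (F : U -> U -> U -> W) :
  (forall a a' b c, F (a + a') b c = F a b c + F a' b c) ->
  (forall a b b' c, F a (b + b') c = F a b c + F a b' c) ->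
  (forall a b c c', F a b (c + c') = F a b c + F a b c') ->
  (forall x, F x x x = 0) ->
  forall a b c, F a b c + F a c b + F b a c + F b c a + F c a b + F c b a = 0.
Proof.
move=> FDl FDm FDr F0 a b c; pose q x := F x x x.
have -> : F a b c + F a c b + F b a c + F b c a + F c a b + F c b a
    = q (a + b + c) - q (a + b) - q (a + c) - q (b + c) + q a + q b + q c.
  by rewrite /q !(FDl, FDm, FDr); zmod_lin.
by rewrite /q !F0 !subr0 !addr0.
Qed.

Section LmodTorsion.
Variables (R : numFieldType) (V : lmodType R).

Lemma mulrnSI n : injective (fun x : V => x *+ n.+1).
Proof.
move=> x y; rewrite -(scaler_nat (R:=R) n.+1 x) -(scaler_nat (R:=R) n.+1 y).
by apply: scalerI; rewrite pnatr_eq0.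
Qed.

Lemma eq_scale_half (x y : V) : x = 2^-1 *: y <-> x *+ 2 = y.
Proof.
have two_neq0 : (2 : R) != 0 by rewrite pnatr_eq0.
rewrite -(scaler_nat (R:=R) 2 x).
by split=> [->|<-]; rewrite scalerA ?mulfV ?mulVf ?scale1r.
Qed.

End LmodTorsion.

Arguments mulrnSI {R V} n [x1 x2].

Section JordanAlgebra.
Variables (R : numFieldType) (V : lmodType R) (mul : V -> V -> V).
Hypothesis jmulDl : left_distributive mul +%R.
Hypothesis jmulC : commutative mul.
Hypothesis jordan : forall x y, mul (mul x y) (mul x x) = mul x (mul y (mul x x)).

Lemma jmulDr : right_distributive mul +%R.
Proof. by move=> x y z; rewrite jmulC jmulDl !(jmulC _ x). Qed.

Lemma jmul0l x : mul 0 x = 0.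
Proof. by apply: (addIr (mul 0 x)); rewrite -jmulDl !add0r. Qed.

Lemma jmul0r x : mul x 0 = 0.
Proof. by rewrite jmulC jmul0l. Qed.

Lemma jmulNl x y : mul (- x) y = - mul x y.
Proof. by apply: (addIr (mul x y)); rewrite -jmulDl !addNr jmul0l. Qed.

Lemma jmulNr x y : mul x (- y) = - mul x y.
Proof. by rewrite jmulC jmulNl jmulC. Qed.

Lemma jmulMnl x y n : mul (x *+ n) y = mul x y *+ n.
Proof. by elim: n => [|n IH]; rewrite ?jmul0l // !mulrS jmulDl IH. Qed.

Lemma jmulMnr x y n : mul x (y *+ n) = mul x y *+ n.
Proof. by rewrite jmulC jmulMnl jmulC. Qed.

Lemma jordan_linearized u y x :
  mul (mul (mul u u) y) x =
  mul (mul u u) (mul y x) + (mul (mul u y) (mul u x) - mul u (mul y (mul u x))) *+ 2.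
Proof.
pose T a b d := mul (mul a y) (mul b d) - mul a (mul y (mul b d)).
have E : T u u x + T u x u + T u u x + T u x u + T x u u + T x u u = 0.
  by apply: (polarization3 (F := T)) => [a a' b d|a b b' d|a b d d'|z];
    rewrite /T ?jordan ?subrr // ?(jmulDl, jmulDr); zmod_lin.
rewrite /T (jmulC x u) [mul x (mul y _)]jmulC (jmulC y (mul u u)) in E.
rewrite [mul (mul x y) _]jmulC (jmulC x y) in E.
by apply: (mulrnSI 1); apply/esym/(eq_subr_transfer E); zmod_lin.
Qed.

Lemma tripotent_sqr_idem u :
  mul (mul u u) u = u -> mul (mul u u) (mul u u) = mul u u.
Proof. by move=> u3; rewrite jordan [mul u (mul u u)]jmulC u3. Qed.

Lemma peirce01_mul0 f x y :
  mul f f = f -> mul f x = 0 -> mul f y = y -> mul x y = 0.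
Proof.
move=> f2 fx fy.
have fxy : mul f (mul x y) = 0.
  have := jordan_linearized f x y; rewrite f2 fx fy jmul0l => E.
  by apply: (eq_subr_transfer E); zmod_lin.
have := jordan_linearized f y x; rewrite f2 fy fx !jmul0r subrr mul0rn addr0.
by move=> E; rewrite jmulC E (jmulC y x) fxy.
Qed.

Lemma proj_sub_sqr a p :
  mul a a = a -> mul p p = p -> mul a p = p -> a - p = mul (a - p) (a - p).
Proof.
move=> a2 p2 ap.
by rewrite jmulDl !jmulDr !jmulNl !jmulNr a2 p2 ap (jmulC p a) ap; zmod_lin.
Qed.

Section HalfSpaceTripotent.
Variables c u : V.
Hypotheses (c2 : mul c c = c *+ 2) (cu : mul c u = u) (u3 : mul (mul u u) u = u).

Let uc : mul u c = u. Proof. by rewrite jmulC. Qed.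
Let ue : mul u (mul u u) = u. Proof. by rewrite jmulC. Qed.
Let e2 := tripotent_sqr_idem u3.

Lemma sqrc_mul_c : mul (mul (mul u u) c) c = mul (mul u u) c *+ 2.
Proof. by rewrite jordan_linearized uc c2 cu subrr mul0rn addr0 jmulMnr. Qed.

Lemma sqrc_mul_u : mul (mul (mul u u) c) u = u.
Proof.
have := jordan_linearized u c u; rewrite cu u3 uc ue.
rewrite [mul u (mul c _)]jmulC (jmulC c (mul u u)) => E.
by apply: (mulrnSI 2); apply: (eq_subr_transfer E); zmod_lin.
Qed.

Lemma sqrc_mul_sqr : mul (mul (mul u u) c) (mul u u) = mul (mul u u) c.
Proof.
have := jordan_linearized u (mul u u) c.
by rewrite e2 ue uc u3 subrr mul0rn addr0 => E; rewrite [LHS]jmulC -E.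
Qed.

Lemma sqrc_sqr :
  mul (mul (mul u u) c) (mul (mul u u) c) = mul (mul u u) c *+ 2.
Proof.
have cq : mul c (mul (mul u u) c) = mul (mul u u) c *+ 2.
  by rewrite jmulC sqrc_mul_c.
have uq : mul u (mul (mul u u) c) = u by rewrite jmulC sqrc_mul_u.
have eq : mul (mul u u) (mul (mul u u) c) = mul (mul u u) c.
  by rewrite jmulC sqrc_mul_sqr.
by rewrite jordan_linearized cq uq uc cu subrr mul0rn addr0 jmulMnr eq.
Qed.

End HalfSpaceTripotent.

Section OrthogonalTripotents.
Variables c u v : V.
Hypotheses (c2 : mul c c = c *+ 2) (cu : mul c u = u) (cv : mul c v = v).
Hypotheses (v3 : mul (mul v v) v = v) (vu : mul (mul v v) u = 0).

Lemma orth_mul0 : mul u v = 0.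
Proof. exact: peirce01_mul0 (tripotent_sqr_idem v3) vu v3. Qed.

Let vu0 : mul v u = 0. Proof. by rewrite jmulC orth_mul0. Qed.

Lemma orth_sqrs_mul0 : mul (mul v v) (mul u u) = 0.
Proof.
have := jordan_linearized v u u.
by rewrite vu vu0 jmul0l !jmul0r subrr mul0rn addr0 => <-.
Qed.

Lemma orth_sqr_mul0 : mul (mul u u) v = 0.
Proof. exact: peirce01_mul0 (tripotent_sqr_idem v3) orth_sqrs_mul0 v3. Qed.

Lemma orth_sqrc_mul0 : mul (mul (mul u u) c) v = 0.
Proof.
by rewrite jordan_linearized cv orth_sqr_mul0 orth_mul0 !jmul0r subrr mul0rn addr0.
Qed.

Lemma orth_mul_sqrc0 : mul u (mul (mul v v) c) = 0.
Proof. by rewrite jmulC jordan_linearized cu vu vu0 !jmul0r subrr mul0rn addr0. Qed.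

Lemma orth_sqrc_sqrc0 : mul (mul (mul u u) c) (mul (mul v v) c) = 0.
Proof.
have cq : mul c (mul (mul v v) c) = mul (mul v v) c *+ 2.
  by rewrite jmulC sqrc_mul_c.
have eq : mul (mul u u) (mul (mul v v) c) = 0.
  have := jordan_linearized u (mul v v) c.
  rewrite [mul (mul u u) (mul v v)]jmulC orth_sqrs_mul0 jmul0l.
  rewrite [mul u (mul v v)]jmulC vu (jmulC u c) cu vu !jmul0r jmul0l.
  by rewrite subrr mul0rn addr0.
by rewrite jordan_linearized cq orth_mul_sqrc0 !jmul0r jmulMnr eq mul0rn subrr mul0rn addr0.
Qed.

End OrthogonalTripotents.

Section HalfSpaceOfProjection.
Variable a : V.
Hypothesis a2 : mul a a = a.

Let c2 : mul (a *+ 2) (a *+ 2) = a *+ 2 *+ 2.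
Proof. by rewrite jmulMnl jmulMnr a2. Qed.

Let cE u : mul a u = 2^-1 *: u -> mul (a *+ 2) u = u.
Proof. by rewrite jmulMnl => /eq_scale_half. Qed.

Let sqrcE u : mul (mul u u) (a *+ 2) = mul a (mul u u) *+ 2.
Proof. by rewrite jmulMnr jmulC. Qed.

Variable u : V.
Hypotheses (au : mul a u = 2^-1 *: u) (u3 : mul (mul u u) u = u).

Lemma au2_idem : mul (mul a (mul u u)) (mul a (mul u u)) = mul a (mul u u).
Proof.
apply: (mulrnSI 3); have := sqrc_sqr c2 (cE au) u3.
by rewrite sqrcE jmulMnl jmulMnr -!mulrnA.
Qed.

Lemma au2_mul_proj : mul a (mul a (mul u u)) = mul a (mul u u).
Proof.
apply: (mulrnSI 3); have := sqrc_mul_c c2 (cE au).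
by rewrite jmulC sqrcE jmulMnl jmulMnr -!mulrnA.
Qed.

Lemma au2_mul_half : mul (mul a (mul u u)) u = 2^-1 *: u.
Proof.
by apply/eq_scale_half; have := sqrc_mul_u (cE au) u3; rewrite sqrcE jmulMnl.
Qed.

Lemma au2_mul_sqr : mul (mul a (mul u u)) (mul u u) = mul a (mul u u).
Proof.
by apply: (mulrnSI 1); have := sqrc_mul_sqr (cE au) u3; rewrite sqrcE jmulMnl.
Qed.

Variable v : V.
Hypotheses (av : mul a v = 2^-1 *: v) (v3 : mul (mul v v) v = v).
Hypothesis vu : mul (mul v v) u = 0.

Lemma au2_orth : mul (mul a (mul u u)) (mul a (mul v v)) = 0.
Proof.
apply: (mulrnSI 3); have := orth_sqrc_sqrc0 c2 (cE au) (cE av) v3 vu.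
by rewrite !sqrcE jmulMnl jmulMnr -mulrnA !mul0rn.
Qed.

Lemma au2_mul_orth : mul (mul a (mul u u)) v = 0.
Proof.
apply: (mulrnSI 1); have := orth_sqrc_mul0 (cE av) v3 vu.
by rewrite sqrcE jmulMnl mul0rn.
Qed.

Lemma mul_orth_au2 : mul u (mul a (mul v v)) = 0.
Proof.
apply: (mulrnSI 1); have := orth_mul_sqrc0 (cE au) v3 vu.
by rewrite sqrcE jmulMnr mul0rn.
Qed.

End HalfSpaceOfProjection.

End JordanAlgebra.

Theorem proposition2p4 (R : realType) (V : completeNormedModType R)
  (mul : V -> V -> V) (one : V)
  (HV : is_unital_JB_algebra mul one) (a : V) (ha : projection mul a) :
  (forall u : V, tripotent mul u -> in_V12 mul a u ->
     let p := mul a (mul u u) in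
     [/\ projection mul p, jle mul p a, in_V12 mul p u & mul p (mul u u) = p])
  /\ (forall u : V, tripotent mul u -> in_V12 mul a u -> u <> 0 ->
        mul a (mul u u) <> 0)
  /\ (forall u v : V, tripotent mul u -> tripotent mul v ->
        in_V12 mul a u -> in_V12 mul a v -> orthogonal_trip mul u v ->
        let p := mul a (mul u u) in
        let q := mul a (mul v v) in
        [/\ projection mul p, projection mul q, mul p q = 0,
            mul p v = 0 & mul u q = 0]).
Proof.
case: HV => mulDl [_ [mulC [jordan _]]].
have u3 u : tripotent mul u -> mul (mul u u) u = u.
  by rewrite /tripotent /triple subrr add0r.
split; [|split].
- move=> u hu hau /=.
  have p2 := au2_idem mulDl mulC jordan ha hau (u3 u hu).
  have ap := au2_mul_proj mulDl mulC jordan ha hau.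
  have pu := au2_mul_half mulDl mulC jordan hau (u3 u hu).
  have pe := au2_mul_sqr mulDl mulC jordan hau (u3 u hu).
  by split => //; exists (a - mul a (mul u u)); exact: proj_sub_sqr.
- move=> u hu hau u0 p0; apply: u0.
  have := au2_mul_half mulDl mulC jordan hau (u3 u hu).
  rewrite p0 (jmul0l mulDl) => /esym/eqP.
  by rewrite scaler_eq0 invr_eq0 pnatr_eq0 => /eqP.
- move=> u v hu hv hau hav huv /=.
  have vu : mul (mul v v) u = 0.
    by move: huv; rewrite /orthogonal_trip /triple (mulC u v) subrr add0r.
  have p2 := au2_idem mulDl mulC jordan ha hau (u3 u hu).
  have q2 := au2_idem mulDl mulC jordan ha hav (u3 v hv).
  have pq := au2_orth mulDl mulC jordan ha hau hav (u3 v hv) vu.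
  have pv := au2_mul_orth mulDl mulC jordan hav (u3 v hv) vu.
  by have uq := mul_orth_au2 mulDl mulC jordan hau (u3 v hv) vu.
Qed.
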